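(* For every constant $c>0$ there is a constant $c'>0$ such that the following holds. Let $G$ be a finite simple graph with maximum degree $d\ge 1$, and let $D(G)$ be a straight-line drawing of $G$ in the base plane $\mathcal{P}_1=\{z=0\}\subset\mathbb{R}^3$ with distinct vertex positions and angular resolution at least $c/d$ (i.e., any two distinct edges incident to a common vertex form an angle at least $c/d$ in $D(G)$). Then there is a 3D arc diagram drawing of $G$ with base plane $\mathcal{P}_1$ and with the same vertex positions as $D(G)$ (so every arc projects perpendicularly onto the corresponding straight-line edge of $D(G)$) whose angular resolution is at least $c'/\sqrt{d}$.
   Context: A 3D arc diagram drawing of $G$ with base plane $\mathcal{P}_1=\{z=0\}$ is a placement of the vertices at distinct points of $\mathcal{P}_1$, together with, for each edge $e=(a,b)$, a circular arc (a contiguous subset of a circle; a straight segment is allowed as the degenerate case) with endpoints at the positions of $a$ and $b$, such that: the arc lies in the plane $\mathcal{P}_2$ containing the segment $ab$ and perpendicular to $\mathcal{P}_1$ (so the arc projects perpendicularly onto the segment $ab$ in $\mathcal{P}_1$); all arcs lie in the closed half-space $z\ge 0$; and the arc forms the same angle $\alpha_e\in[0,\pi/2]$ with the segment $ab$ at both of its endpoints. The angle between two arcs incident to a common vertex $v$ is the angle in $[0,\pi]$ between their tangent rays at $v$ (directed into the arcs). The angular resolution of the drawing is the minimum of this angle over all vertices $v$ and all pairs of distinct edges incident to $v$. The angular resolution of a 2D straight-line drawing is defined analogously using the segments themselves. *)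

From Stdlib Require Import Reals Lra List.
Import ListNotations.
Open Scope R_scope.

Definition simple_graph (n : nat) (E : nat -> nat -> bool) : Prop :=
  (forall u v, E u v = E v u) /\
  (forall v, E v v = false) /\
  (forall u v, E u v = true -> (u < n)%nat /\ (v < n)%nat).

Definition degree (n : nat) (E : nat -> nat -> bool) (v : nat) : nat :=
  length (filter (E v) (seq 0 n)).

Definition max_degree (n : nat) (E : nat -> nat -> bool) (d : nat) : Prop :=
  (forall v, (v < n)%nat -> (degree n E v <= d)%nat) /\
  (exists v, (v < n)%nat /\ degree n E v = d).

Definition vec3 : Type := (R * R * R)%type.
Definition dot3 (a b : vec3) : R :=
  let '(a1, a2, a3) := a in let '(b1, b2, b3) := b in a1 * b1 + a2 * b2 + a3 * b3.
Definition norm3 (a : vec3) : R := sqrt (dot3 a a).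

Definition angle3 (a b : vec3) : R := acos (dot3 a b / (norm3 a * norm3 b)).

Definition pos3 (p : nat -> R * R) (v : nat) : vec3 := (fst (p v), snd (p v), 0).

Definition sub3 (a b : vec3) : vec3 :=
  let '(a1, a2, a3) := a in let '(b1, b2, b3) := b in (a1 - b1, a2 - b2, a3 - b3).

Definition distinct_positions (n : nat) (p : nat -> R * R) : Prop :=
  forall u v, (u < n)%nat -> (v < n)%nat -> u <> v -> p u <> p v.

Definition straight_angres_ge (n : nat) (E : nat -> nat -> bool)
    (p : nat -> R * R) (r : R) : Prop :=
  forall v u w, E v u = true -> E v w = true -> u <> w ->
    r <= angle3 (sub3 (pos3 p u) (pos3 p v)) (sub3 (pos3 p w) (pos3 p v)).

(** For an edge e = (a,b), the arc lies in the vertical plane through ab,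
    in z >= 0, and makes the same angle alpha_e in [0, pi/2] with the
    segment ab at both endpoints; such a circular arc (a straight segment
    when alpha_e = 0) is uniquely determined by alpha_e.  We represent the
    drawing by the family [alpha] of these angles (symmetric in the edge). *)
Definition arc_diagram (n : nat) (E : nat -> nat -> bool)
    (alpha : nat -> nat -> R) : Prop :=
  forall a b, E a b = true ->
    alpha a b = alpha b a /\ 0 <= alpha a b <= PI / 2.

(** The circular arc of edge (a,b) with angle alpha (0 < alpha <= pi/2):
    centre c = m - h*z_hat with m the midpoint of ab, L = |ab|/2,
    h = L / tan alpha, radius L / sin alpha; the arc is the set of points
    of that circle in the vertical plane through ab with z >= 0.
    Its unit tangent ray at endpoint a, directed into the arc, is
    cos(alpha) * (b - a)/|b - a| + sin(alpha) * z_hat (this also holds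
    for the degenerate straight segment alpha = 0). *)
Definition arc_tangent (p : nat -> R * R) (alpha : nat -> nat -> R)
    (a b : nat) : vec3 :=
  let '(x, y, _) := sub3 (pos3 p b) (pos3 p a) in
  let l := sqrt (x * x + y * y) in
  (cos (alpha a b) * (x / l), cos (alpha a b) * (y / l), sin (alpha a b)).

Definition arc_angres_ge (n : nat) (E : nat -> nat -> bool)
    (p : nat -> R * R) (alpha : nat -> nat -> R) (r : R) : Prop :=
  forall v u w, E v u = true -> E v w = true -> u <> w ->
    r <= angle3 (arc_tangent p alpha v u) (arc_tangent p alpha v w).

From Stdlib Require Import Reals Lra Lia ZArith.
Open Scope R_scope.

(* An edge leaving a vertex in direction phi gets an arc angle that depends
   only on the doubled direction 2 phi, so both endpoints of the edge agree.
   For two edges at a vertex with planar angle psi and arc angles t1, t2 the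
   tangent rays make an angle theta with
     1 - cos theta = (1 - cos (t1 - t2)) + cos t1 cos t2 (1 - cos psi).
   If psi >~ 1/sqrt d, the second term alone gives theta >~ 1/sqrt d.
   Otherwise the doubled directions are O(psi)-close, and the arc angle is the
   fractional part of sqrt d times the dominant coordinate of the doubled
   direction; at this scale the fractional part does not shrink distances, so
   |t1 - t2| >~ sqrt d * psi >= c / sqrt d. *)

Lemma cos_taylor_bounds a : -2 <= a <= 2 ->
  1 - a*a/2 <= cos a <= 1 - a*a/2 + a*a*a*a/24.
Proof.
  intros Ha. destruct (pre_cos_bound a 0 ltac:(lra) ltac:(lra)) as [Hlo Hhi].
  unfold cos_approx, cos_term in Hlo, Hhi. simpl in Hlo, Hhi. lra.
Qed.

Lemma one_minus_cos_ge t : -1 <= t <= 1 -> t*t/3 <= 1 - cos t.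
Proof.
  intros Ht. destruct (cos_taylor_bounds t ltac:(lra)) as [_ Hhi].
  assert (0 <= t*t <= 1) by nra. nra.
Qed.

Lemma le_acos x D : -1 <= D <= 1 -> 0 <= x <= PI -> D <= cos x -> x <= acos D.
Proof.
  intros HD Hx Hcos. destruct (Rle_lt_dec x (acos D)) as [Hle|Hlt]; [exact Hle|].
  pose proof (acos_bound D).
  assert (cos x < cos (acos D)) by (apply cos_decreasing_1; lra).
  rewrite cos_acos in *; lra.
Qed.

Lemma cos_ge_of_le_acos y C : -1 <= C <= 1 -> 0 <= y <= PI -> y <= acos C -> C <= cos y.
Proof.
  intros HC Hy Hle. destruct (Rle_lt_dec C (cos y)) as [Hc|Hc]; [exact Hc|].
  pose proof (acos_bound C). rewrite <- (cos_acos C HC) in Hc.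
  apply cos_decreasing_0 in Hc; lra.
Qed.

Lemma le_acos_of_one_minus_ge x D : 0 <= x <= 1 -> -1 <= D -> x*x/2 <= 1 - D ->
  x <= acos D.
Proof.
  intros Hx HD Hgap. pose proof PI2_1.
  destruct (cos_taylor_bounds x ltac:(lra)) as [Hlo _].
  assert (0 <= x*x) by nra.
  apply le_acos; lra.
Qed.

Lemma one_minus_ge_of_le_acos y C : -1 <= C <= 1 -> 0 <= y <= 1 -> y <= acos C ->
  y*y/3 <= 1 - C.
Proof.
  intros HC Hy Hle. pose proof PI2_1.
  pose proof (cos_ge_of_le_acos y C HC ltac:(lra) Hle).
  pose proof (one_minus_cos_ge y ltac:(lra)). lra.
Qed.

Lemma frac_part_sep a b : (a - b)*(a - b) <= 1/4 ->
  (a - b)*(a - b) <= (frac_part a - frac_part b)*(frac_part a - frac_part b).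
Proof.
  intros Hab. unfold frac_part.
  replace (a - IZR (Int_part a) - (b - IZR (Int_part b)))
    with (a - b - IZR (Int_part a - Int_part b)) by (rewrite minus_IZR; ring).
  set (k := (Int_part a - Int_part b)%Z).
  assert (-1/2 <= a - b <= 1/2) by nra.
  destruct (Z.eq_dec k 0) as [Hk|Hk].
  - rewrite Hk, Rminus_0_r. lra.
  - assert (IZR k <= -1 \/ 1 <= IZR k) as [Hneg|Hpos].
    { destruct (Z_le_gt_dec k (-1)) as [h|h];
        [left; apply IZR_le in h | right; apply IZR_le]; lia || lra. }
    all: nra.
Qed.

Lemma unit_sector_sq_diff_le P1 Q1 P2 Q2 :
  P1*P1 + Q1*Q1 = 1 -> P2*P2 + Q2*Q2 = 1 ->
  Rabs P1 <= Rabs Q1 -> Rabs P2 <= Rabs Q2 ->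
  (P1-P2)*(P1-P2) + (Q1-Q2)*(Q1-Q2) <= 1/4 ->
  (Q1-Q2)*(Q1-Q2) <= (P1-P2)*(P1-P2).
Proof.
  intros HU1 HU2 HS1 HS2 Hclose.
  assert (HPP : Rabs (P1*P2) <= Rabs (Q1*Q2)).
  { rewrite !Rabs_mult. apply Rmult_le_compat; auto using Rabs_pos. }
  assert (HQ : 0 < Q1*Q2).
  { assert (7/8 <= P1*P2 + Q1*Q2) by nra.
    revert HPP. unfold Rabs; repeat destruct Rcase_abs; lra. }
  assert (HP12 : P1*P2 <= Q1*Q2).
  { revert HPP. unfold Rabs; repeat destruct Rcase_abs; lra. }
  apply Rsqr_le_abs_1 in HS1, HS2. unfold Rsqr in HS1, HS2.
  assert (Hsum : (P1+P2)*(P1+P2) <= (Q1+Q2)*(Q1+Q2)) by nra.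
  assert (Hpos : 0 < (Q1+Q2)*(Q1+Q2)) by nra.
  (* on the unit circle [(Q1-Q2)(Q1+Q2) = -(P1-P2)(P1+P2)] *)
  assert (Hprod : (Q1-Q2)*(Q1-Q2)*((Q1+Q2)*(Q1+Q2))
                  = (P1-P2)*(P1-P2)*((P1+P2)*(P1+P2))).
  { replace ((Q1-Q2)*(Q1-Q2)*((Q1+Q2)*(Q1+Q2)))
      with ((Q1*Q1-Q2*Q2)*(Q1*Q1-Q2*Q2)) by ring.
    assert (HQ2 : Q1*Q1-Q2*Q2 = -(P1*P1-P2*P2)) by lra.
    rewrite HQ2. ring. }
  apply Rmult_le_reg_r with ((Q1+Q2)*(Q1+Q2)); [exact Hpos|].
  rewrite Hprod. apply Rmult_le_compat_l; [apply Rle_0_sqr | exact Hsum].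
Qed.

(* The two branches take values in the disjoint ranges [0, 1/4) and
   [1/2, 3/4), so directions in different sectors get angles 1/4 apart. *)
Definition arc_angle (s X Y : R) : R :=
  if Rle_dec (Rabs X) (Rabs Y) then frac_part (s*X) / 4
  else 1/2 + frac_part (s*Y) / 4.

Lemma arc_angle_bounds s X Y : 0 <= arc_angle s X Y <= 3/4.
Proof.
  unfold arc_angle. pose proof (base_fp (s*X)). pose proof (base_fp (s*Y)).
  destruct Rle_dec; lra.
Qed.

Lemma arc_angle_sep s X1 Y1 X2 Y2 :
  X1*X1 + Y1*Y1 = 1 -> X2*X2 + Y2*Y2 = 1 -> 1 <= s ->
  s*s*((X1-X2)*(X1-X2) + (Y1-Y2)*(Y1-Y2)) < 1/4 ->
  let da := arc_angle s X1 Y1 - arc_angle s X2 Y2 in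
  s*s*((X1-X2)*(X1-X2) + (Y1-Y2)*(Y1-Y2))/32 <= da*da \/ 1/16 <= da*da.
Proof.
  intros HU1 HU2 Hs Hclose da.
  set (rho := (X1-X2)*(X1-X2) + (Y1-Y2)*(Y1-Y2)) in *.
  assert (Hrho : rho <= 1/4) by (unfold rho in *; nra).
  assert (HdX := Rle_0_sqr (X1-X2)). assert (HdY := Rle_0_sqr (Y1-Y2)).
  unfold Rsqr in HdX, HdY.
  assert (Hsector : forall u1 u2, rho/2 <= (u1-u2)*(u1-u2) <= rho ->
            s*s*rho/32 <= (frac_part (s*u1)/4 - frac_part (s*u2)/4)
                          *(frac_part (s*u1)/4 - frac_part (s*u2)/4)).
  { intros u1 u2 Hu.
    assert (Hsep : (s*u1 - s*u2)*(s*u1 - s*u2)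
                   <= (frac_part (s*u1) - frac_part (s*u2))*(frac_part (s*u1) - frac_part (s*u2))).
    { apply frac_part_sep. nra. }
    nra. }
  unfold da, arc_angle.
  pose proof (base_fp (s*X1)). pose proof (base_fp (s*Y1)).
  pose proof (base_fp (s*X2)). pose proof (base_fp (s*Y2)).
  destruct (Rle_dec (Rabs X1) (Rabs Y1)) as [Hs1|Hs1];
  destruct (Rle_dec (Rabs X2) (Rabs Y2)) as [Hs2|Hs2].
  - left. apply Hsector.
    pose proof (unit_sector_sq_diff_le X1 Y1 X2 Y2 HU1 HU2 Hs1 Hs2 Hrho). unfold rho; lra.
  - right. nra.
  - right. nra.
  - left. replace (1/2 + frac_part (s*Y1)/4 - (1/2 + frac_part (s*Y2)/4))
      with (frac_part (s*Y1)/4 - frac_part (s*Y2)/4) by ring.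
    apply Hsector.
    apply Rnot_le_lt, Rlt_le in Hs1, Hs2.
    pose proof (unit_sector_sq_diff_le Y1 X1 Y2 X2 ltac:(lra) ltac:(lra)
                  Hs1 Hs2 ltac:(unfold rho in Hrho; lra)). unfold rho; lra.
Qed.

Lemma unit_dot_bounds a1 b1 a2 b2 : a1*a1 + b1*b1 = 1 -> a2*a2 + b2*b2 = 1 ->
  -1 <= a1*a2 + b1*b2 <= 1.
Proof.
  intros HU1 HU2.
  assert (Hlag : (a1*a2 + b1*b2)*(a1*a2 + b1*b2) + (a1*b2 - a2*b1)*(a1*b2 - a2*b1)
                 = (a1*a1 + b1*b1)*(a2*a2 + b2*b2)) by ring.
  rewrite HU1, HU2 in Hlag. pose proof (Rle_0_sqr (a1*b2 - a2*b1)). unfold Rsqr in *.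
  nra.
Qed.

(* For a unit direction (a, b) = (cos phi, sin phi), the pair
   (a^2 - b^2, 2ab) = (cos 2phi, sin 2phi) is unchanged when (a, b) is reversed. *)
Definition dir_arc_angle (s a b : R) : R := arc_angle s (a*a - b*b) (2*a*b).

Lemma dir_arc_angle_bounds s a b : 0 <= dir_arc_angle s a b <= 3/4.
Proof. apply arc_angle_bounds. Qed.

Lemma doubled_unit a b : a*a + b*b = 1 -> (a*a - b*b)*(a*a - b*b) + (2*a*b)*(2*a*b) = 1.
Proof.
  intros HU. transitivity ((a*a + b*b)*(a*a + b*b)); [ring|]. rewrite HU. ring.
Qed.

Lemma doubled_sq_dist a1 b1 a2 b2 : a1*a1 + b1*b1 = 1 -> a2*a2 + b2*b2 = 1 ->
  (a1*a1 - b1*b1 - (a2*a2 - b2*b2))*(a1*a1 - b1*b1 - (a2*a2 - b2*b2))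
  + (2*a1*b1 - 2*a2*b2)*(2*a1*b1 - 2*a2*b2)
  = 4*(1 - (a1*a2 + b1*b2))*(1 + (a1*a2 + b1*b2)).
Proof.
  intros HU1 HU2.
  transitivity ((a1*a1 + b1*b1 + (a2*a2 + b2*b2))*(a1*a1 + b1*b1 + (a2*a2 + b2*b2))
                - 4*(a1*a2 + b1*b2)*(a1*a2 + b1*b2)); [ring|].
  rewrite HU1, HU2. ring.
Qed.

Lemma one_minus_tangent_cos_ge s k a1 b1 a2 b2 :
  a1*a1 + b1*b1 = 1 -> a2*a2 + b2*b2 = 1 -> 1 <= s -> 0 < k <= 1/8 ->
  k <= (1 - (a1*a2 + b1*b2)) * (s*s*(s*s)) ->
  let t1 := dir_arc_angle s a1 b1 in
  let t2 := dir_arc_angle s a2 b2 in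
  k/24 <= (1 - (cos t1 * cos t2 * (a1*a2 + b1*b2) + sin t1 * sin t2)) * (s*s).
Proof.
  intros HU1 HU2 Hs Hk Hfar t1 t2.
  pose proof (doubled_sq_dist a1 b1 a2 b2 HU1 HU2) as Hrho.
  set (c := a1*a2 + b1*b2) in *. set (S := s*s) in *.
  pose proof (unit_dot_bounds a1 b1 a2 b2 HU1 HU2) as Hc. fold c in Hc.
  assert (Hgap : 1 - (cos t1 * cos t2 * c + sin t1 * sin t2)
                 = (1 - cos (t1 - t2)) + cos t1 * cos t2 * (1 - c))
    by (rewrite cos_minus; ring).
  rewrite Hgap.
  assert (HS : 1 <= S) by (unfold S; nra).
  assert (He : 0 < 1 - c) by nra.
  pose proof (dir_arc_angle_bounds s a1 b1) as Ht1. fold t1 in Ht1.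
  pose proof (dir_arc_angle_bounds s a2 b2) as Ht2. fold t2 in Ht2.
  assert (Hcos : 1/2 <= cos t1 * cos t2).
  { destruct (cos_taylor_bounds t1 ltac:(lra)) as [Hc1 _].
    destruct (cos_taylor_bounds t2 ltac:(lra)) as [Hc2 _].
    assert (23/32 <= cos t1) by nra. assert (23/32 <= cos t2) by nra. nra. }
  pose proof (one_minus_cos_ge (t1 - t2) ltac:(lra)) as Hdt.
  assert (0 <= (t1 - t2)*(t1 - t2)) by apply Rle_0_sqr.
  destruct (Rle_lt_dec 1 (32*S*(1 - c))) as [Hbig|Hsmall].
  - assert ((1 - c)*S/2 <= (1 - cos (t1 - t2) + cos t1 * cos t2 * (1 - c)) * S) by nra.
    lra.
  - assert (Hclose : S*(4*(1 - c)*(1 + c)) < 1/4) by nra.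
    rewrite <- Hrho in Hclose.
    destruct (arc_angle_sep s _ _ _ _ (doubled_unit a1 b1 HU1) (doubled_unit a2 b2 HU2) Hs
                Hclose) as [Hsep|Hsep].
    + assert (S*(4*(1 - c)*(1 + c))/32 <= (t1 - t2)*(t1 - t2))
        by (rewrite <- Hrho; exact Hsep).
      assert (S*(1 - c)/24 <= 1 - cos (t1 - t2)) by nra. nra.
    + assert (1/16 <= (t1 - t2)*(t1 - t2)) by exact Hsep.
      assert (1/48 <= (1 - cos (t1 - t2) + cos t1 * cos t2 * (1 - c)) * S) by nra.
      lra.
Qed.

Lemma tangent_angle_ge s m a1 b1 a2 b2 :
  a1*a1 + b1*b1 = 1 -> a2*a2 + b2*b2 = 1 -> 1 <= s -> 0 < m <= 1 ->
  m/(s*s) <= acos (a1*a2 + b1*b2) ->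
  let t1 := dir_arc_angle s a1 b1 in
  let t2 := dir_arc_angle s a2 b2 in
  m*m/192/s <= acos (cos t1 * cos t2 * (a1*a2 + b1*b2) + sin t1 * sin t2).
Proof.
  intros HU1 HU2 Hs Hm Hplanar t1 t2.
  set (c := a1*a2 + b1*b2) in *. set (S := s*s) in *.
  pose proof (unit_dot_bounds a1 b1 a2 b2 HU1 HU2) as Hc. fold c in Hc.
  assert (HS : 1 <= S) by (unfold S; nra).
  assert (Hms : 0 <= m/S <= 1).
  { split; [apply Rlt_le, Rdiv_lt_0_compat; lra|].
    apply Rmult_le_reg_r with S; [lra|]. unfold Rdiv. rewrite Rmult_assoc, Rinv_l; lra. }
  assert (Hfar : m*m/8 <= (1 - c) * (S*S)).
  { pose proof (one_minus_ge_of_le_acos (m/S) c Hc Hms Hplanar) as H.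
    replace (m*m) with ((m/S)*(m/S)*(S*S)) by (field; lra).
    assert (0 <= (m/S)*(m/S)) by nra. nra. }
  pose proof (one_minus_tangent_cos_ge s (m*m/8) a1 b1 a2 b2 HU1 HU2 Hs
                ltac:(split; nra) Hfar) as Hgap.
  cbv zeta in Hgap. fold t1 t2 c S in Hgap.
  set (D := cos t1 * cos t2 * c + sin t1 * sin t2) in *.
  assert (HD : -1 <= D).
  { pose proof (dir_arc_angle_bounds s a1 b1) as Ht1.
    pose proof (dir_arc_angle_bounds s a2 b2) as Ht2.
    fold t1 in Ht1. fold t2 in Ht2. pose proof PI2_1.
    assert (0 <= sin t1) by (apply sin_ge_0; lra).
    assert (0 <= sin t2) by (apply sin_ge_0; lra).
    assert (0 <= cos t1) by (apply cos_ge_0; lra).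
    assert (0 <= cos t2) by (apply cos_ge_0; lra).
    pose proof (COS_bound t1). pose proof (COS_bound t2).
    assert (0 <= cos t1 * cos t2 <= 1) by nra.
    unfold D. nra. }
  assert (Hs0 : 0 < s) by lra.
  apply le_acos_of_one_minus_ge; [|exact HD|].
  - split; [apply Rlt_le, Rdiv_lt_0_compat; nra|].
    apply Rmult_le_reg_r with s; [lra|]. unfold Rdiv. rewrite Rmult_assoc, Rinv_l; nra.
  - apply Rmult_le_reg_r with S; [lra|].
    replace (m*m/192/s * (m*m/192/s) / 2 * S) with ((m*m/192)*(m*m/192)/2)
      by (unfold S; field; lra).
    assert (0 <= m*m/192 <= 1) by nra.
    assert (m*m/192*(m*m/192) <= m*m/192) by nra. lra.
Qed.

Definition dir_x (p : nat -> R * R) (a b : nat) : R :=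
  let x := fst (p b) - fst (p a) in let y := snd (p b) - snd (p a) in
  x / sqrt (x*x + y*y).

Definition dir_y (p : nat -> R * R) (a b : nat) : R :=
  let x := fst (p b) - fst (p a) in let y := snd (p b) - snd (p a) in
  y / sqrt (x*x + y*y).

Definition edge_arc_angle (s : R) (p : nat -> R * R) (a b : nat) : R :=
  dir_arc_angle s (dir_x p a b) (dir_y p a b).

Lemma sqrt_sum_sq_opp x y : sqrt (-x * -x + -y * -y) = sqrt (x*x + y*y).
Proof. f_equal. ring. Qed.

Lemma dir_x_swap p a b : dir_x p b a = - dir_x p a b.
Proof.
  unfold dir_x.
  replace (fst (p a) - fst (p b)) with (- (fst (p b) - fst (p a))) by ring.
  replace (snd (p a) - snd (p b)) with (- (snd (p b) - snd (p a))) by ring.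
  rewrite sqrt_sum_sq_opp. unfold Rdiv. ring.
Qed.

Lemma dir_y_swap p a b : dir_y p b a = - dir_y p a b.
Proof.
  unfold dir_y.
  replace (fst (p a) - fst (p b)) with (- (fst (p b) - fst (p a))) by ring.
  replace (snd (p a) - snd (p b)) with (- (snd (p b) - snd (p a))) by ring.
  rewrite sqrt_sum_sq_opp. unfold Rdiv. ring.
Qed.

Lemma edge_arc_angle_sym s p a b : edge_arc_angle s p a b = edge_arc_angle s p b a.
Proof.
  unfold edge_arc_angle, dir_arc_angle. rewrite dir_x_swap, dir_y_swap.
  f_equal; ring.
Qed.

Lemma sum_sq_sub_pos (q r : R * R) : q <> r ->
  0 < (fst q - fst r)*(fst q - fst r) + (snd q - snd r)*(snd q - snd r).
Proof.
  intros Hqr. destruct q as [q1 q2], r as [r1 r2]; simpl.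
  pose proof (Rle_0_sqr (q1 - r1)). pose proof (Rle_0_sqr (q2 - r2)). unfold Rsqr in *.
  destruct (Req_dec q1 r1) as [->|H1]; [destruct (Req_dec q2 r2) as [->|H2]|].
  - congruence.
  - assert (0 < (q2 - r2)*(q2 - r2)) by (apply Rsqr_pos_lt; lra). lra.
  - assert (0 < (q1 - r1)*(q1 - r1)) by (apply Rsqr_pos_lt; lra). lra.
Qed.

Lemma dir_unit p a b : p b <> p a -> dir_x p a b * dir_x p a b + dir_y p a b * dir_y p a b = 1.
Proof.
  intros Hab. pose proof (sum_sq_sub_pos _ _ Hab) as Hpos. unfold dir_x, dir_y.
  set (x := fst (p b) - fst (p a)) in *. set (y := snd (p b) - snd (p a)) in *.
  pose proof (sqrt_sqrt (x*x + y*y) ltac:(lra)) as Hl.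
  pose proof (sqrt_lt_R0 (x*x + y*y) Hpos) as Hl0.
  replace (x / sqrt (x*x + y*y) * (x / sqrt (x*x + y*y))
           + y / sqrt (x*x + y*y) * (y / sqrt (x*x + y*y)))
    with ((x*x + y*y) / (sqrt (x*x + y*y) * sqrt (x*x + y*y))) by (field; lra).
  rewrite Hl. field. lra.
Qed.

Lemma angle3_edges p v u w : p u <> p v -> p w <> p v ->
  angle3 (sub3 (pos3 p u) (pos3 p v)) (sub3 (pos3 p w) (pos3 p v))
  = acos (dir_x p v u * dir_x p v w + dir_y p v u * dir_y p v w).
Proof.
  intros Hu Hw. pose proof (sum_sq_sub_pos _ _ Hu) as Hpu. pose proof (sum_sq_sub_pos _ _ Hw) as Hpw.
  unfold angle3, norm3, dot3, sub3, pos3, dir_x, dir_y. f_equal.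
  set (x1 := fst (p u) - fst (p v)) in *. set (y1 := snd (p u) - snd (p v)) in *.
  set (x2 := fst (p w) - fst (p v)) in *. set (y2 := snd (p w) - snd (p v)) in *.
  pose proof (sqrt_lt_R0 _ Hpu). pose proof (sqrt_lt_R0 _ Hpw).
  replace (0 - 0) with 0 by ring. rewrite !Rmult_0_l, !Rplus_0_r.
  field. lra.
Qed.

Lemma arc_tangent_eq p alpha a b : arc_tangent p alpha a b
  = (cos (alpha a b) * dir_x p a b, cos (alpha a b) * dir_y p a b, sin (alpha a b)).
Proof. reflexivity. Qed.

Lemma angle3_tangents a1 b1 a2 b2 t1 t2 : a1*a1 + b1*b1 = 1 -> a2*a2 + b2*b2 = 1 ->
  angle3 (cos t1 * a1, cos t1 * b1, sin t1) (cos t2 * a2, cos t2 * b2, sin t2)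
  = acos (cos t1 * cos t2 * (a1*a2 + b1*b2) + sin t1 * sin t2).
Proof.
  intros HU1 HU2. unfold angle3, norm3, dot3.
  assert (Hnorm : forall t a b, a*a + b*b = 1 ->
            cos t * a * (cos t * a) + cos t * b * (cos t * b) + sin t * sin t = 1).
  { intros t a b Hab. pose proof (sin2_cos2 t) as Hsc. unfold Rsqr in Hsc.
    transitivity (cos t * cos t * (a*a + b*b) + sin t * sin t); [ring|].
    rewrite Hab. lra. }
  rewrite (Hnorm t1 a1 b1 HU1), (Hnorm t2 a2 b2 HU2), sqrt_1. f_equal. field.
Qed.

Lemma edge_arc_angle_vertex_ge s m p v u w :
  p u <> p v -> p w <> p v -> 1 <= s -> 0 < m <= 1 ->
  m/(s*s) <= angle3 (sub3 (pos3 p u) (pos3 p v)) (sub3 (pos3 p w) (pos3 p v)) ->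
  m*m/192/s <= angle3 (arc_tangent p (edge_arc_angle s p) v u)
                      (arc_tangent p (edge_arc_angle s p) v w).
Proof.
  intros Hu Hw Hs Hm Hplanar.
  rewrite angle3_edges in Hplanar by assumption.
  rewrite !arc_tangent_eq, angle3_tangents by (apply dir_unit; assumption).
  apply tangent_angle_ge; try (apply dir_unit; assumption); assumption.
Qed.

Theorem theorem4 :
  forall c : R, 0 < c ->
  exists c' : R, 0 < c' /\
    forall (n : nat) (E : nat -> nat -> bool) (d : nat) (p : nat -> R * R),
      simple_graph n E ->
      max_degree n E d ->
      (1 <= d)%nat ->
      distinct_positions n p ->
      straight_angres_ge n E p (c / INR d) ->
      exists alpha : nat -> nat -> R,
        arc_diagram n E alpha /\
        arc_angres_ge n E p alpha (c' / sqrt (INR d)).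
Proof.
  intros c Hc. set (m := Rmin c 1).
  assert (Hm : 0 < m <= 1) by (split; [apply Rmin_glb_lt | apply Rmin_r]; lra).
  exists (m*m/192). split; [nra|].
  intros n E d p [_ [Hirr Hin]] _ Hd Hdist Hstraight.
  assert (HdR : 1 <= INR d) by (apply (le_INR 1) in Hd; simpl in Hd; lra).
  set (s := sqrt (INR d)).
  assert (Hs : 1 <= s) by (rewrite <- sqrt_1; apply sqrt_le_1_alt; lra).
  assert (Hss : s*s = INR d) by (apply sqrt_sqrt; lra).
  exists (edge_arc_angle s p). split.
  - intros a b _. split; [apply edge_arc_angle_sym|].
    pose proof (dir_arc_angle_bounds s (dir_x p a b) (dir_y p a b)). pose proof PI2_1.
    unfold edge_arc_angle. lra.
  - intros v u w Hu Hw Huw.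
    destruct (Hin _ _ Hu) as [Hv Hu']. destruct (Hin _ _ Hw) as [_ Hw'].
    assert (Hpu : p u <> p v)
      by (apply Hdist; auto; intros ->; rewrite Hirr in Hu; discriminate).
    assert (Hpw : p w <> p v)
      by (apply Hdist; auto; intros ->; rewrite Hirr in Hw; discriminate).
    apply edge_arc_angle_vertex_ge; [assumption | assumption | exact Hs | exact Hm |].
    rewrite Hss. apply Rle_trans with (c / INR d); [|exact (Hstraight v u w Hu Hw Huw)].
    apply Rmult_le_compat_r; [apply Rlt_le, Rinv_0_lt_compat; lra | apply Rmin_l].
Qed.
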